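(* Let $A=[a_1,\dots,a_N]$ and $B=[b_1,\dots,b_N]$ be $N\times N$ complex matrices with columns $a_i,b_i$, let $\theta$ be a real parameter, and let $M(\theta)=(1-\theta)A+\theta B$ with columns $m_k(\theta)=(1-\theta)a_k+\theta b_k$. Define recursively (the modified, unnormalized Gram–Schmidt procedure) $z_1=v_1=m_1$ and, for $k\ge 2$, \[ v_k=m_k-\sum_{j=1}^{k-1}\frac{\langle z_j,m_k\rangle}{\|z_j\|^2}\,z_j,\qquad z_k=\Big(\prod_{j=1}^{k-1}\|z_j\|^2\Big)\,v_k . \] Then for every $k\in\{1,\dots,N\}$, $v_k(\theta)\in\mathbf{p}_{D_k+1}(\theta)/q_{D_k}(\theta)$, where $D_k=3^{k-1}-1$; that is, $v_k(\theta)$ can be written as a vector whose entries are polynomials in $\theta$ of degree at most $D_k+1$ divided by a common polynomial in $\theta$ of degree at most $D_k$.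
   Context: $\langle x,y\rangle=\sum_i \overline{x_i}y_i$ is the standard inner product on $\mathbb{C}^N$ and $\|x\|^2=\langle x,x\rangle$; since $\theta$ is real, $\langle z_j,m_k\rangle$ and $\|z_j\|^2$ are polynomials in $\theta$ with complex coefficients. Notation: $\mathbf{p}_\ell(\theta)$ denotes vectors each of whose entries is a polynomial of degree $\ell$ in $\theta$, $q_r(\theta)$ denotes polynomial functions of degree $r$ in $\theta$, and $\mathbf{p}_\ell(\theta)/q_r(\theta)$ denotes vectors of rational functions with numerators of degree $\ell$ and denominators of degree $r$. *)

From HB Require Import structures.
From mathcomp Require Import all_boot all_order all_algebra.
From mathcomp Require Import complex.
Set Implicit Arguments. Unset Strict Implicit. Unset Printing Implicit Defensive.
Import Order.TTheory GRing.Theory Num.Theory.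
Local Open Scope ring_scope.
Local Open Scope complex_scope.

Section GS.
Variables (R : rcfType) (N : nat).
Local Notation C := (R[i]).

Definition cinner (x y : 'cV[C]_N) : C := \sum_i (conjc (x i 0)) * y i 0.
Definition cnormsq (x : 'cV[C]_N) : C := cinner x x.

Definition gs_v (zs : seq 'cV[C]_N) (mk : 'cV[C]_N) : 'cV[C]_N :=
  mk - \sum_(z <- zs) (cinner z mk / cnormsq z) *: z.

Definition gs_step (zs : seq 'cV[C]_N) (mk : 'cV[C]_N) : seq 'cV[C]_N :=
  rcons zs ((\prod_(z <- zs) cnormsq z) *: gs_v zs mk).

Definition gs_zs (ms : seq 'cV[C]_N) : seq 'cV[C]_N := foldl gs_step [::] ms.

Definition Mtheta (A B : 'M[C]_N) (theta : R) : 'M[C]_N :=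
  (1 - theta)%:C *: A + theta%:C *: B.

Definition mcols (A B : 'M[C]_N) (theta : R) : seq 'cV[C]_N :=
  [seq col i (Mtheta A B theta) | i <- enum 'I_N].

(* z_1, ..., z_{k} for the 0-based index k : 'I_N, i.e. the z_j with j < k *)
Definition gs_prev (A B : 'M[C]_N) (theta : R) (k : 'I_N) : seq 'cV[C]_N :=
  gs_zs (take k (mcols A B theta)).

(* v_{k+1} (0-based index k) *)
Definition gs_vk (A B : 'M[C]_N) (theta : R) (k : 'I_N) : 'cV[C]_N :=
  gs_v (gs_prev A B theta k) (col k (Mtheta A B theta)).

End GS.

From HB Require Import structures.
From mathcomp Require Import all_boot all_order all_algebra.
From mathcomp Require Import complex.
From mathcomp Require Import ring zify.
(* Clear denominators.  With Q_k = prod_{j<k} ||z_j||^2, the vector z_k = Q_k v_k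
   is a polynomial vector in theta, and adding one vector z in front of the
   previous ones updates the numerator as  P' = ||z||^2 P - Q <z, m> z.  With
   S_k = 2 (deg z_1 + ... + deg z_{k-1}) we get deg Q_k <= S_k and
   deg z_k <= S_k + deg m_k, hence S_{k+1} <= 3 S_k + 2 deg m_k and
   S_k <= (3^{k-1} - 1) max_j deg m_j, where deg m_j <= 1. *)

Set Implicit Arguments. Unset Strict Implicit. Unset Printing Implicit Defensive.
Import Order.TTheory GRing.Theory Num.Theory.
Local Open Scope ring_scope.
Local Open Scope complex_scope.

Lemma size_polyM_le (R : nzSemiRingType) (p q : {poly R}) (a b : nat) :
  (size p <= a.+1)%N -> (size q <= b.+1)%N -> (size (p * q)%R <= (a + b).+1)%N.
Proof. by move=> hp hq; have := size_polyMleq p q; lia. Qed.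

Section PolyVectorDegree.
Variables (R : nzRingType) (n : nat).
Implicit Types (z w : 'cV[{poly R}]_n) (a : {poly R}).

Definition vdeg z : nat := \max_i (size (z i ord0)).-1.

Lemma size_vdeg z i : (size (z i ord0) <= (vdeg z).+1)%N.
Proof.
by have := @leq_bigmax _ (fun i => (size (z i ord0)).-1) i; rewrite /vdeg; lia.
Qed.

Lemma vdeg_le z d : (forall i, size (z i ord0) <= d.+1)%N -> (vdeg z <= d)%N.
Proof. by move=> hz; apply/bigmax_leqP => i _; have := hz i; lia. Qed.

Lemma vdegB z w : (vdeg (z - w)%R <= maxn (vdeg z) (vdeg w))%N.
Proof.
apply: vdeg_le => i; rewrite !mxE.
apply: leq_trans (size_polyD _ _) _; rewrite size_polyN.
rewrite geq_max; apply/andP; split; apply: leq_trans (size_vdeg _ i) _;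
  by rewrite ltnS leq_max leqnn ?orbT.
Qed.

Lemma vdegZ a z d e :
  (size a <= d.+1)%N -> (vdeg z <= e)%N -> (vdeg (a *: z)%R <= d + e)%N.
Proof.
move=> ha hz; apply: vdeg_le => i; rewrite mxE; apply: size_polyM_le ha _.
exact: leq_trans (size_vdeg z i) _.
Qed.

End PolyVectorDegree.

Section PolynomialGramSchmidt.
Variables (R : rcfType) (N : nat).
Local Notation C := (R[i]).
Local Notation pvec := ('cV[{poly C}]_N).
Implicit Types (z w m : pvec) (zp ms : seq pvec) (t : R).

Definition peval t z : 'cV[C]_N := map_mx (horner_eval t%:C) z.

Lemma pevalB t z w : peval t (z - w) = peval t z - peval t w.
Proof. exact: map_mxB. Qed.

Lemma pevalZ t (a : {poly C}) z : peval t (a *: z) = a.[t%:C] *: peval t z.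
Proof. exact: map_mxZ. Qed.

Definition pcinner z m : {poly C} := \sum_i map_poly conjc (z i ord0) * m i ord0.

Lemma horner_pcinner z m t : (pcinner z m).[t%:C] = cinner (peval t z) (peval t m).
Proof.
rewrite /pcinner /cinner horner_sum; apply: eq_bigr => i _.
by rewrite hornerM -{1}(conjc_real t) horner_map !mxE.
Qed.

Lemma size_pcinner z m : (size (pcinner z m) <= (vdeg z + vdeg m).+1)%N.
Proof.
rewrite /pcinner; elim/big_ind: _ => [|p q hp hq|i _].
- by rewrite size_poly0.
- by apply: leq_trans (size_polyD p q) _; rewrite geq_max hp hq.
- by apply: size_polyM_le (size_vdeg m i); rewrite size_map_poly size_vdeg.
Qed.

Definition pcnormsq z : {poly C} := pcinner z z.

Definition gs_den zp : {poly C} := \prod_(z <- zp) pcnormsq z.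

(* For zp = [z_1; ...; z_{k-1}] and m = m_k, this is the polynomial z_k. *)
Fixpoint gs_num zp m : pvec :=
  if zp is z :: zs then pcnormsq z *: gs_num zs m - (gs_den zs * pcinner z m) *: z
  else m.

Definition gs_degsum zp : nat := \sum_(z <- zp) (vdeg z).*2.

Lemma size_gs_den zp : (size (gs_den zp) <= (gs_degsum zp).+1)%N.
Proof.
elim: zp => [|z zs IH]; first by rewrite /gs_den big_nil size_poly1.
rewrite /gs_den /gs_degsum !big_cons; apply: size_polyM_le IH.
by rewrite -addnn; apply: size_pcinner.
Qed.

Lemma vdeg_gs_num zp m : (vdeg (gs_num zp m) <= gs_degsum zp + vdeg m)%N.
Proof.
elim: zp => [|z zs IH] /=; first by rewrite /gs_degsum big_nil.
rewrite /gs_degsum big_cons -/(gs_degsum zs).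
apply: leq_trans (vdegB _ _) _; rewrite geq_max; apply/andP; split.
- rewrite -addnA; apply: vdegZ IH.
  by rewrite -addnn; apply: size_pcinner.
- rewrite (_ : _ + _ + _ = gs_degsum zs + (vdeg z + vdeg m) + vdeg z)%N; last by lia.
  exact: vdegZ (size_polyM_le (size_gs_den zs) (size_pcinner z m)) (leqnn _).
Qed.

Lemma horner_gs_den zp t :
  (gs_den zp).[t%:C] = \prod_(x <- map (peval t) zp) cnormsq x.
Proof.
by rewrite /gs_den horner_prod big_map; apply: eq_bigr => z _; rewrite horner_pcinner.
Qed.

Lemma gs_v_cons (z : 'cV[C]_N) zs mk :
  gs_v (z :: zs) mk = gs_v zs mk - (cinner z mk / cnormsq z) *: z.
Proof. by rewrite /gs_v big_cons opprD addrA addrAC. Qed.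

Lemma peval_gs_num zp m t :
  all (fun x => cnormsq x != 0) (map (peval t) zp) ->
  peval t (gs_num zp m) = (gs_den zp).[t%:C] *: gs_v (map (peval t) zp) (peval t m).
Proof.
elim: zp => [|z zs IH] /=.
  by rewrite /gs_den big_nil hornerC scale1r /gs_v big_nil subr0.
case/andP=> nz0 /IH {}IH.
rewrite pevalB !pevalZ IH gs_v_cons /gs_den big_cons -/(gs_den zs).
rewrite !hornerM /pcnormsq !horner_pcinner -/(cnormsq _).
by apply/matrixP => i j; rewrite !mxE; field.
Qed.

Definition gs_pzs ms : seq pvec := foldl (fun zp m => rcons zp (gs_num zp m)) [::] ms.

Lemma gs_pzs_rcons ms m : gs_pzs (rcons ms m) = rcons (gs_pzs ms) (gs_num (gs_pzs ms) m).
Proof. by rewrite /gs_pzs foldl_rcons. Qed.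

Lemma gs_zs_peval ms t :
  all (fun x => cnormsq x != 0) (gs_zs (map (peval t) ms)) ->
  gs_zs (map (peval t) ms) = map (peval t) (gs_pzs ms).
Proof.
elim/last_ind: ms => [//|ms m IH].
rewrite map_rcons /gs_zs foldl_rcons -/(gs_zs _) /gs_step all_rcons.
case/andP=> _ hall; have e := IH hall; rewrite e in hall *.
by rewrite gs_pzs_rcons map_rcons peval_gs_num // horner_gs_den.
Qed.

Lemma gs_degsum_pzs ms d : (forall m, m \in ms -> vdeg m <= d)%N ->
  (gs_degsum (gs_pzs ms) <= (3 ^ size ms - 1) * d)%N.
Proof.
elim/last_ind: ms => [|ms m IH] hms; first by rewrite /gs_degsum big_nil.
have hS : (gs_degsum (gs_pzs ms) <= (3 ^ size ms - 1) * d)%N.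
  by apply: IH => x hx; apply: hms; rewrite mem_rcons in_cons hx orbT.
have hm : (vdeg m <= d)%N by apply: hms; rewrite mem_rcons mem_head.
have := vdeg_gs_num (gs_pzs ms) m; have : (0 < 3 ^ size ms)%N by rewrite expn_gt0.
rewrite gs_pzs_rcons /gs_degsum -cats1 big_cat big_seq1 /= -/(gs_degsum _).
rewrite size_rcons expnS; move: hS; set x := (3 ^ size ms)%N; nia.
Qed.

Definition Mpoly (A B : 'M[C]_N) : 'M[{poly C}]_N :=
  (1 - 'X) *: map_mx polyC A + 'X *: map_mx polyC B.

Lemma peval_col_Mpoly A B t j : peval t (col j (Mpoly A B)) = col j (Mtheta A B t).
Proof. by apply/matrixP => i k; rewrite !mxE horner_evalE !hornerE rmorphB rmorph1. Qed.

Lemma vdeg_col_Mpoly A B j : (vdeg (col j (Mpoly A B)) <= 1)%N.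
Proof.
apply: vdeg_le => i; rewrite !mxE; apply: leq_trans (size_polyD _ _) _.
rewrite geq_max; apply/andP; split; apply: (@size_polyM_le _ _ _ 1 0);
  rewrite ?size_polyX ?size_polyC_leq1 //.
by rewrite -opprB size_polyN -polyC1 size_XsubC.
Qed.

End PolynomialGramSchmidt.

(* k : 'I_N is 0-based, so the paper's index is k+1 and D_{k+1} = 3^k - 1. *)
Theorem lemma5 (R : rcfType) (N : nat) (A B : 'M[R[i]]_N) (k : 'I_N) :
  exists (p : 'I_N -> {poly R[i]}) (q : {poly R[i]}),
    (forall i, (size (p i) <= (3 ^ k - 1).+2)%N) /\
    (size q <= (3 ^ k - 1).+1)%N /\
    forall theta : R,
      all (fun z => cnormsq z != 0) (gs_prev A B theta k) ->
      q.[theta%:C] != 0 /\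
      gs_vk A B theta k = (q.[theta%:C])^-1 *: \col_i (p i).[theta%:C].
Proof.
pose ms := [seq col j (Mpoly A B) | j <- take k (enum 'I_N)].
pose P := gs_num (gs_pzs ms) (col k (Mpoly A B)).
have hS : (gs_degsum (gs_pzs ms) <= 3 ^ k - 1)%N.
  have <- : size ms = k by rewrite size_map size_takel // size_enum_ord ltnW.
  rewrite -[leqRHS]muln1; apply: gs_degsum_pzs => _ /mapP[j _ ->].
  exact: vdeg_col_Mpoly.
have hP : (vdeg P <= gs_degsum (gs_pzs ms) + 1)%N.
  exact: leq_trans (vdeg_gs_num _ _) (leq_add (leqnn _) (vdeg_col_Mpoly A B k)).
exists (fun i => P i ord0), (gs_den (gs_pzs ms)); split.
  by move=> i; apply: leq_trans (size_vdeg P i) _; rewrite ltnS (leq_trans hP) // addn1.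
split; first by apply: leq_trans (size_gs_den _) _; rewrite ltnS.
move=> t; rewrite /gs_vk; have -> : gs_prev A B t k = gs_zs (map (peval t) ms).
  rewrite /gs_prev /mcols -map_take -map_comp; congr gs_zs.
  by apply: eq_map => j /=; rewrite peval_col_Mpoly.
move=> hall; have e := gs_zs_peval hall; rewrite e in hall *.
have hq : (gs_den (gs_pzs ms)).[t%:C] != 0.
  by rewrite horner_gs_den prodf_seq_neq0; apply: sub_all hall => x /= ->.
split; first exact: hq.
have -> : \col_i (P i ord0).[t%:C] = peval t P.
  by apply/matrixP => i j; rewrite !mxE (ord1 j).
by rewrite -peval_col_Mpoly peval_gs_num // scalerA mulVf ?scale1r.
Qed.
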